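(* Let $f:\{0,1\}^n\to\{0,1\}$ be a boolean function that is not invariant under any nonzero translation, i.e.\ $S_f=\{0^n\}$. Then $Q_E^{na}(f)=n$.
   Context: Addition of bit strings is in $\mathbb Z_2^n$ (bitwise mod 2). $S_f:=\{z\in\{0,1\}^n: f(x)=f(x+z)\ \text{for all } x\}$. Nonadaptive exact quantum query model: let $\mathcal H_{\rm in}$ have orthonormal basis $|0\rangle,\dots,|n\rangle$ and let the oracle $O_x$ act by $|i\rangle\mapsto(-1)^{x_i}|i\rangle$ with convention $x_0=0$. A nonadaptive quantum algorithm making $k$ queries consists of an input-independent state $|\psi\rangle\in\mathcal H_{\rm in}^{\otimes k}\otimes\mathcal H_{\rm work}$ (with $\mathcal H_{\rm work}$ a finite-dimensional workspace), to which $O_x^{\otimes k}\otimes I$ is applied, followed by an input-independent two-outcome measurement with outcomes labelled $0,1$. It computes $f$ exactly if for every $x$ the outcome is $f(x)$ with probability $1$. $Q_E^{na}(f)$ is the minimum such $k$. *)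

From HB Require Import structures.
From mathcomp Require Import all_boot all_order all_algebra algC.
Set Implicit Arguments. Unset Strict Implicit. Unset Printing Implicit Defensive.
Import Order.TTheory GRing.Theory Num.Theory.
Local Open Scope ring_scope.

(* Bit strings in {0,1}^n, coordinates indexed 0..n-1 (paper: 1..n). *)
Definition bits (n : nat) := {ffun 'I_n -> bool}.

Definition xorb_bits n (x z : bits n) : bits n := [ffun i => x i (+) z i].

Definition Sf n (f : bits n -> bool) : {set bits n} :=
  [set z | [forall x, f x == f (xorb_bits x z)]].

(* The oracle register H_in has basis |0>,...,|n>; x_0 = 0 and
   x_i (i >= 1) is the i-th bit of x, i.e. x (i-1) in 0-indexing. *)
Definition xext n (x : bits n) (i : 'I_n.+1) : bool :=
  if unlift ord0 i is Some j then x j else false.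

(* Phase of O_x^{(tensor) k} on basis state |i_1 ... i_k>. *)
Definition oracle_phase n k (x : bits n) (q : {ffun 'I_k -> 'I_n.+1}) : algC :=
  \prod_(j < k) (if xext x (q j) then -1 else 1).

(* Basis of H_in^{(tensor) k} (tensor) H_work, with dim H_work = d. *)
Definition qindex (n k d : nat) := ({ffun 'I_k -> 'I_n.+1} * 'I_d)%type.

Definition apply_op (T : finType) (A : T -> T -> algC) (v : T -> algC) : T -> algC :=
  fun a => \sum_b A a b * v b.

Definition is_projector (T : finType) (A : T -> T -> algC) : Prop :=
  (forall a b, A a b = (A b a)^*) /\
  (forall a c, \sum_b A a b * A b c = A a c).

Definition unit_state (T : finType) (v : T -> algC) : Prop :=
  \sum_a `|v a| ^+ 2 = 1.

Definition query_state n k d (x : bits n) (psi : qindex n k d -> algC) :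
  qindex n k d -> algC :=
  fun a => oracle_phase x a.1 * psi a.

(* A nonadaptive k-query algorithm computing f exactly: a unit state psi,
   and a two-outcome (projective) measurement {I - P (outcome 0), P (outcome 1)};
   outcome f(x) occurs with probability 1, i.e. P psi_x = psi_x if f x = 1
   and P psi_x = 0 if f x = 0. *)
Definition na_exact_computes n (f : bits n -> bool) (k : nat) : Prop :=
  exists d : nat, exists psi : qindex n k d -> algC,
  exists P : qindex n k d -> qindex n k d -> algC,
    unit_state psi /\ is_projector P /\
    forall x : bits n, forall a : qindex n k d,
      apply_op P (query_state x psi) a =
        (if f x then query_state x psi a else 0).

Definition QEna_eq n (f : bits n -> bool) (q : nat) : Prop :=
  na_exact_computes f q /\ forall k, na_exact_computes f k -> (q <= k)%N.

From mathcomp Require Import all_boot all_order all_algebra algC.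
From mathcomp Require Import ring.
Set Implicit Arguments. Unset Strict Implicit. Unset Printing Implicit Defensive.
Import Order.TTheory GRing.Theory Num.Theory.
Local Open Scope ring_scope.

(* For a k-query state psi, the inner product of the query
   states psi_x and psi_y only depends on z = x + y: it is the "overlap"
   g(z) = sum_a phase_z(a) |psi a|^2, and g(0) = 1.  If the algorithm
   computes f exactly, then psi_x and psi_y lie in complementary eigenspaces
   of the measurement projector whenever f x <> f y, so g(z) = 0 for every
   z outside S_f.  Hence S_f = {0} forces g to be the point mass at 0, whose
   Fourier coefficient at the full parity chi(z) = (-1)^{|z|} is 1.  On the
   other hand every phase_z(q) is a character of degree <= k, so for k < n
   it is orthogonal to chi and that coefficient vanishes.

   With n queries, the uniform superposition over query tuples
   q with q_j in {0, j+1} gives orthonormal query states psi_x (one factor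
   1 + (-1)^{x_j + y_j} per coordinate), and the projector onto the span of
   {psi_x | f x} computes any f exactly. *)

Definition sgn (b : bool) : algC := if b then -1 else 1.

Lemma sgn_xor a b : sgn (a (+) b) = sgn a * sgn b.
Proof. by case: a; case: b; rewrite /sgn /= ?mulr1 ?mul1r ?mulrNN ?mulr1. Qed.

Lemma sgn_conj a : (sgn a)^* = sgn a.
Proof. by case: a; rewrite /sgn ?rmorphN1 ?rmorph1. Qed.

Lemma xext0 n (x : bits n) : xext x ord0 = false.
Proof. by rewrite /xext unlift_none. Qed.

Lemma xext_lift n (x : bits n) j : xext x (lift ord0 j) = x j.
Proof. by rewrite /xext liftK. Qed.

Lemma xext_xor n (x z : bits n) i :
  xext (xorb_bits x z) i = xext x i (+) xext z i.
Proof. by rewrite /xext; case: (unlift ord0 i) => // j; rewrite ffunE. Qed.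

Lemma oracle_phase_xor n k (x z : bits n) (q : {ffun 'I_k -> 'I_n.+1}) :
  oracle_phase (xorb_bits x z) q = oracle_phase x q * oracle_phase z q.
Proof.
rewrite /oracle_phase -big_split /=; apply: eq_bigr => j _.
by rewrite xext_xor; exact: sgn_xor.
Qed.

Lemma oracle_phase0 n k (q : {ffun 'I_k -> 'I_n.+1}) :
  oracle_phase [ffun=> false] q = 1.
Proof.
rewrite /oracle_phase big1 // => j _; rewrite /xext.
by case: (unlift ord0 (q j)) => // i; rewrite ffunE.
Qed.

Lemma oracle_phase_conj n k (x : bits n) (q : {ffun 'I_k -> 'I_n.+1}) :
  (oracle_phase x q)^* = oracle_phase x q.
Proof. rewrite rmorph_prod; apply: eq_bigr => j _; exact: sgn_conj. Qed.

(* Conjugation commutes with products and sums; restated with the ^*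
   notation so that they rewrite syntactically. *)
Lemma conjCM (u v : algC) : (u * v)^* = u^* * v^*.
Proof. exact: rmorphM. Qed.

Lemma conjC_sum (I : finType) (A : pred I) (F : I -> algC) :
  (\sum_(i | A i) F i)^* = \sum_(i | A i) (F i)^*.
Proof. exact: rmorph_sum. Qed.

Lemma xorbb_bits n (x : bits n) : xorb_bits x x = [ffun=> false].
Proof. by apply/ffunP => i; rewrite !ffunE addbb. Qed.

Definition overlap n k d (psi : qindex n k d -> algC) (z : bits n) : algC :=
  \sum_a oracle_phase z a.1 * `|psi a| ^+ 2.

Lemma query_inner n k d (psi : qindex n k d -> algC) (x y : bits n) :
  \sum_a (query_state y psi a)^* * query_state x psi a =
  overlap psi (xorb_bits x y).
Proof.
apply: eq_bigr => a _.
rewrite /query_state conjCM oracle_phase_conj normCK oracle_phase_xor.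
by rewrite mulrACA [psi a * _]mulrC [oracle_phase y _ * _]mulrC.
Qed.

Lemma overlap0 n k d (psi : qindex n k d -> algC) :
  overlap psi [ffun=> false] = \sum_a `|psi a| ^+ 2.
Proof. by apply: eq_bigr => a _; rewrite oracle_phase0 mul1r. Qed.

Lemma projector_orth (T : finType) (P : T -> T -> algC) (u w : T -> algC) :
  is_projector P -> (forall a, apply_op P u a = u a) ->
  (forall a, apply_op P w a = 0) -> \sum_a (w a)^* * u a = 0.
Proof.
move=> [P_herm _] Pu Pw.
transitivity (\sum_b (\sum_a (w a)^* * P a b) * u b).
  under eq_bigr => a _ do rewrite -Pu /apply_op mulr_sumr.
  rewrite exchange_big /=; apply: eq_bigr => b _.
  by rewrite mulr_suml; apply: eq_bigr => a _; rewrite mulrA.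
apply: big1 => b _.
have -> : \sum_a (w a)^* * P a b = (apply_op P w b)^*.
  by rewrite conjC_sum; apply: eq_bigr => a _; rewrite conjCM P_herm mulrC.
by rewrite Pw rmorph0 mul0r.
Qed.

Lemma overlap_nonperiod n k d (f : bits n -> bool)
    (psi : qindex n k d -> algC) (P : qindex n k d -> qindex n k d -> algC) :
  is_projector P ->
  (forall x a, apply_op P (query_state x psi) a =
                 (if f x then query_state x psi a else 0)) ->
  forall z, z \notin Sf f -> overlap psi z = 0.
Proof.
move=> projP exact_f z; rewrite inE negb_forall => /existsP [x].
set y := xorb_bits x z => fxy.
have orth u w : f u -> ~~ f w -> overlap psi (xorb_bits u w) = 0.
  move=> fu fw; rewrite -query_inner; apply: (projector_orth projP) => a.
    by rewrite exact_f fu.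
  by rewrite exact_f (negbTE fw).
have -> : z = xorb_bits x y.
  by apply/ffunP => i; rewrite /y !ffunE addbA addbb.
have xorC : xorb_bits x y = xorb_bits y x.
  by apply/ffunP => i; rewrite !ffunE addbC.
case Efx: (f x) fxy; case Efy: (f y) => //= _.
  by rewrite orth ?Efx ?Efy.
by rewrite xorC orth ?Efx ?Efy.
Qed.

Definition parity n (z : bits n) : algC := \prod_(j < n) sgn (z j).

Lemma parity_phase n (z : bits n) :
  parity z = oracle_phase z [ffun j : 'I_n => lift ord0 j].
Proof. by apply: eq_bigr => j _; rewrite ffunE xext_lift. Qed.

Lemma unqueried_index n k (q : {ffun 'I_k -> 'I_n.+1}) : (k < n)%N ->
  exists i : 'I_n, lift ord0 i \notin codom q.
Proof.
move=> lt_kn; apply/existsP; rewrite -negb_forall; apply/negP => /forallP allq.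
have sub : [set lift ord0 i | i : 'I_n] \subset [set x in codom q].
  by apply/subsetP => _ /imsetP [i _ ->]; rewrite inE allq.
move: (subset_leq_card sub); rewrite card_imset ?card_ord; last exact: lift_inj.
rewrite cardsE => /leq_trans/(_ (card_size _)); rewrite size_codom card_ord.
by rewrite leqNgt lt_kn.
Qed.

(* Fourier orthogonality: if q misses coordinate i0, translating by e_i0
   flips the parity but not the phase of q, so the sum is its own opposite. *)
Lemma parity_phase_orth n k (q : {ffun 'I_k -> 'I_n.+1}) : (k < n)%N ->
  \sum_(z : bits n) parity z * oracle_phase z q = 0.
Proof.
move=> lt_kn; have [i0 i0_free] := unqueried_index q lt_kn.
pose e : bits n := [ffun i => i == i0].
have e_phase : oracle_phase e q = 1.
  apply: big1 => j _; rewrite /xext.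
  case: unliftP => [i qj|] //=; rewrite ffunE.
  have [i_i0 | //] := eqVneq i i0.
  by move: i0_free; rewrite -i_i0 -qj codom_f.
have e_parity : parity e = -1.
  rewrite /parity (bigD1 i0) //= big1 => [|j /negbTE nj]; last by rewrite ffunE nj.
  by rewrite ffunE eqxx mulr1.
have e_inv : involutive (fun z : bits n => xorb_bits z e).
  by move=> z; apply/ffunP => i; rewrite !ffunE -addbA addbb addbF.
set S := \sum_z _.
have S_opp : S = - S.
  rewrite {1}/S (reindex_inj (can_inj e_inv)) /= -sumrN; apply: eq_bigr => z _.
  rewrite !parity_phase !oracle_phase_xor -!parity_phase e_parity e_phase.
  by rewrite mulr1 mulrN1 mulNr.
have : S *+ 2 = 0 by rewrite mulr2n {1}S_opp addNr.
by move/eqP; rewrite mulrn_eq0 => /eqP.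
Qed.

Lemma parity_overlap n k d (psi : qindex n k d -> algC) : (k < n)%N ->
  \sum_z parity z * overlap psi z = 0.
Proof.
move=> lt_kn.
under eq_bigr => z _ do rewrite /overlap mulr_sumr.
rewrite exchange_big /=; apply: big1 => a _.
under eq_bigr => z _ do rewrite mulrA.
by rewrite -mulr_suml parity_phase_orth // mul0r.
Qed.

(* Lower bound: with S_f = {0}, the parity coefficient of g equals g(0) = 1,
   which contradicts parity_overlap when k < n. *)
Lemma lower_bound n (f : bits n -> bool) k :
  Sf f = [set [ffun=> false]] -> na_exact_computes f k -> (n <= k)%N.
Proof.
move=> Sf0 [d [psi [P [unit_psi [projP exact_f]]]]].
rewrite leqNgt; apply/negP => lt_kn.
have overlap_delta : \sum_z parity z * overlap psi z = 1.
  rewrite (bigD1 [ffun=> false]) //= big1 => [|z nz]; last first.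
    by rewrite (overlap_nonperiod projP exact_f) ?mulr0 // Sf0 inE.
  by rewrite overlap0 unit_psi parity_phase oracle_phase0 mulr1 addr0.
by move: (oner_eq0 algC); rewrite -overlap_delta parity_overlap ?eqxx.
Qed.

Lemma sum_delta (I : finType) (A : pred I) (F : I -> algC) x :
  \sum_(y | A y) F y * (x == y)%:R = if A x then F x else 0.
Proof.
rewrite big_mkcond (bigD1 x) //= big1 => [|y ny].
  by case: (A x); rewrite ?eqxx ?mulr1 addr0.
by rewrite eq_sym (negbTE ny); case: (A y); rewrite ?mulr0.
Qed.

Section OrthonormalProjector.

Variables (I T : finType) (e : I -> T -> algC) (A : pred I).
Hypothesis e_on : forall x y, \sum_a (e y a)^* * e x a = (x == y)%:R.

Definition span_proj (a b : T) : algC := \sum_(x | A x) e x a * (e x b)^*.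

Lemma span_proj_apply x a :
  apply_op span_proj (e x) a = if A x then e x a else 0.
Proof.
rewrite /apply_op.
under eq_bigr => b _ do rewrite mulr_suml.
rewrite exchange_big /= -(sum_delta A (fun y => e y a)); apply: eq_bigr => y _.
by rewrite -e_on mulr_sumr; apply: eq_bigr => b _; rewrite mulrA.
Qed.

Lemma span_proj_projector : is_projector span_proj.
Proof.
split=> [a b | a c].
  rewrite /span_proj conjC_sum; apply: eq_bigr => x _.
  by rewrite conjCM conjCK mulrC.
transitivity (\sum_(x | A x) apply_op span_proj (e x) a * (e x c)^*).
  rewrite /span_proj; under eq_bigr => b _ do rewrite mulr_sumr.
  rewrite exchange_big /=; apply: eq_bigr => x _.
  rewrite /apply_op mulr_suml; apply: eq_bigr => b _; ring.
by apply: eq_bigr => x Ax; rewrite span_proj_apply Ax.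
Qed.

End OrthonormalProjector.

Definition amp n : algC := (sqrtC (2 ^+ n))^-1.

Definition allowed n (j : 'I_n) (i : 'I_n.+1) : algC :=
  ((i == ord0) || (i == lift ord0 j))%:R.

Definition psi_full n (a : qindex n n 1) : algC :=
  amp n * \prod_j allowed j (a.1 j).

Lemma amp_sq n : amp n ^+ 2 * 2 ^+ n = 1.
Proof. by rewrite /amp exprVn sqrtCK mulVf // expf_neq0 // pnatr_eq0. Qed.

Lemma psi_full_sq n (a : qindex n n 1) :
  `|psi_full a| ^+ 2 = amp n ^+ 2 * \prod_j allowed j (a.1 j).
Proof.
have amp_ge0 : 0 <= amp n by rewrite invr_ge0 sqrtC_ge0 exprn_ge0 ?ler0n.
rewrite ger0_norm; last by rewrite mulr_ge0 // prodr_ge0 // => j _; exact: ler0n.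
rewrite exprMn -prodrXl; congr (_ * _); apply: eq_bigr => j _.
by rewrite /allowed; case: (_ || _); rewrite ?expr1n ?expr0n.
Qed.

Lemma allowed_sum n (z : bits n) j :
  \sum_(i : 'I_n.+1) sgn (xext z i) * allowed j i = 1 + sgn (z j).
Proof.
rewrite (bigD1 ord0) //= (bigD1 (lift ord0 j)) //= big1 => [|i /andP [i0 ij]].
  by rewrite xext0 xext_lift /allowed !eqxx orbT /= !mulr1 addr0.
by rewrite /allowed (negbTE i0) (negbTE ij) mulr0.
Qed.

Lemma overlap_psi_full n (z : bits n) :
  overlap (@psi_full n) z = \prod_j (1 + sgn (z j)) * amp n ^+ 2.
Proof.
rewrite /overlap -(pair_bigA _ (fun q w => oracle_phase z q * `|@psi_full n (q, w)| ^+ 2)).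
under eq_bigr => q _ do
  rewrite big_ord1 psi_full_sq mulrCA -big_split /=.
rewrite -mulr_sumr mulrC; congr (_ * _).
transitivity (\prod_j \sum_i sgn (xext z i) * allowed j i).
  by rewrite bigA_distr_bigA.
by apply: eq_bigr => j _; exact: allowed_sum.
Qed.

(* Distinct inputs give orthogonal query states: a differing coordinate
   contributes the factor 1 + (-1) = 0. *)
Lemma psi_full_orthonormal n (x y : bits n) :
  \sum_a (query_state y (@psi_full n) a)^* * query_state x (@psi_full n) a =
  (x == y)%:R.
Proof.
rewrite query_inner overlap_psi_full.
have [<- | neq_xy] := eqVneq x y.
  rewrite xorbb_bits (eq_bigr (fun _ => 2)) => [|j _]; last by rewrite ffunE.
  by rewrite prodr_const card_ord mulrC amp_sq.
have [j /eqP xj] : exists j, x j != y j.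
  apply/existsP; apply: contraNT neq_xy => /existsPn same.
  by apply/eqP/ffunP => j; apply/eqP/negbNE.
rewrite (bigD1 j) //= ffunE.
have -> : x j (+) y j = true by case: (x j) (y j) xj => [] [].
by rewrite /sgn subrr !mul0r.
Qed.

Lemma upper_bound n (f : bits n -> bool) : na_exact_computes f n.
Proof.
have e_on := @psi_full_orthonormal n.
exists 1%N, (@psi_full n), (span_proj (fun x : bits n => query_state x (@psi_full n)) f).
split; last split.
- by rewrite /unit_state -overlap0 -(xorbb_bits [ffun=> false]) -query_inner e_on eqxx.
- exact: span_proj_projector e_on.
- by move=> x a; rewrite (span_proj_apply _ e_on).
Qed.

Theorem corollary7p3 (n : nat) (f : bits n -> bool) :
  Sf f = [set [ffun=> false]] -> QEna_eq f n.
Proof.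
move=> Sf0; split; first exact: upper_bound.
by move=> k; exact: lower_bound.
Qed.
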